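(* Let $m=2k+1$ with $k$ a nonnegative integer and let $n\ge m-1$ be an integer. Let $M(u)=M(u^2+u^{2m})$, $u\in(0,+\infty)$, where $M(h)$ is the first order Melnikov function of $(1.1)_\epsilon$. Put $z=[n/2]m-\frac{m^2-5m+4}{2}$ and $q=[n/2]m-\frac{m^2-5m}{2}$. Then $M(u)$ is a linear combination of the following $\left[\frac{n-1}{2}\right]+\left[\frac n2\right]m-\frac14m^2+\frac32m+\frac34$ linearly independent functions: $$u^{2p+1}\ (0\le p\le z);\qquad u^{2q+2s+k(m-1)+1}\ (0\le s\le \tfrac{m-5}{2},\ 0\le k\le 2s+1);\qquad (u^2+u^{2m})^{l+1}\ (0\le l\le[(n-1)/2]),$$ (i.e. $u,u^3,\dots,u^{2z+1},u^{2q+1},u^{2q+m},u^{2q+3},u^{2q+m+2},u^{2q+2m+1},\dots,u^{2q+m^2-4m},u^2+u^{2m},\dots,(u^2+u^{2m})^{[(n-1)/2]+1}$), and the coefficients of this linear combination are independent, i.e. as the coefficients of $p^\pm,q^\pm$ range over all real values these coefficients take all real values.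
   Context: $[x]$ is the integer part. System $(1.1)_\epsilon$: $\dot x=y+\epsilon p^{+},\ \dot y=-x+\epsilon q^{+}$ for $y\ge x^{m}$, and $\dot x=y+\epsilon p^{-},\ \dot y=-x+\epsilon q^{-}$ for $y<x^{m}$, where $p^{\pm}=\sum_{i+j=0}^{n}a^{\pm}_{i,j}x^iy^j$, $q^{\pm}=\sum_{i+j=0}^{n}b^{\pm}_{i,j}x^iy^j$ are arbitrary real polynomials of degree $n$. For $h>0$, $u=u(h)>0$ solves $u^2+u^{2m}=h$; $L_h^{+}$ is the arc of $x^2+y^2=h$ in $\{y\ge x^m\}$ traversed clockwise from $(-u,(-u)^m)$ to $(u,u^m)$, and $L_h^-$ the arc in $\{y\le x^m\}$ traversed clockwise from $(u,u^m)$ to $(-u,(-u)^m)$. The first order Melnikov function is $M(h)=\int_{L_h^+}q^+dx-p^+dy+\int_{L_h^-}q^-dx-p^-dy$. *)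

From Stdlib Require Import Reals ZArith List.
From Coquelicot Require Import Coquelicot.
Open Scope R_scope.

Definition poly2 (c : nat -> nat -> R) (n : nat) (x y : R) : R :=
  sum_f_R0 (fun i => sum_f_R0 (fun j => c i j * x ^ i * y ^ j) (n - i)) n.

Definition line_integral (P Q : R -> R -> R) (g1 g2 : R -> R) (a b : R) : R :=
  RInt (fun t => P (g1 t) (g2 t) * Derive g1 t + Q (g1 t) (g2 t) * Derive g2 t) a b.

(* For u > 0 and h = u^2 + u^(2m): radius sqrt h, and the polar angle of the
   switching point (u, u^m) is atan (u^(m-1)); the other one (-u,(-u)^m) =
   (-u,-u^m) (m odd) has angle atan (u^(m-1)) + PI. *)
Definition radius (m : nat) (u : R) : R := sqrt (u ^ 2 + u ^ (2 * m)).
Definition ang0 (m : nat) (u : R) : R := atan (u ^ (m - 1)).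

(* L_h^+ : arc of x^2+y^2=h in {y >= x^m}, clockwise from (-u,(-u)^m) to (u,u^m):
   polar angle decreases from ang0+PI to ang0, t in [0,PI]. *)
Definition Lplus_x (m : nat) (u t : R) : R := radius m u * cos (ang0 m u + PI - t).
Definition Lplus_y (m : nat) (u t : R) : R := radius m u * sin (ang0 m u + PI - t).
(* L_h^- : arc in {y <= x^m}, clockwise from (u,u^m) to (-u,(-u)^m):
   polar angle decreases from ang0 to ang0-PI, t in [0,PI]. *)
Definition Lminus_x (m : nat) (u t : R) : R := radius m u * cos (ang0 m u - t).
Definition Lminus_y (m : nat) (u t : R) : R := radius m u * sin (ang0 m u - t).

(* First order Melnikov function M(h) = int_{L_h^+} q^+ dx - p^+ dy
   + int_{L_h^-} q^- dx - p^- dy, evaluated at h = u^2 + u^(2m), i.e. M(u).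
   ap, bp, am, bm are the coefficients a^+, b^+, a^-, b^- of p^+, q^+, p^-, q^-. *)
Definition melnikov_u (m n : nat) (ap bp am bm : nat -> nat -> R) (u : R) : R :=
  line_integral (poly2 bp n) (fun x y => - poly2 ap n x y)
                (Lplus_x m u) (Lplus_y m u) 0 PI
  + line_integral (poly2 bm n) (fun x y => - poly2 am n x y)
                (Lminus_x m u) (Lminus_y m u) 0 PI.

(* Integer parameters (Z.div is floor division, so [x] is the integer part). *)
Definition zpar (m n : nat) : Z :=
  (Z.of_nat n / 2) * Z.of_nat m - (Z.of_nat m * Z.of_nat m - 5 * Z.of_nat m + 4) / 2.
Definition qpar (m n : nat) : Z :=
  (Z.of_nat n / 2) * Z.of_nat m - (Z.of_nat m * Z.of_nat m - 5 * Z.of_nat m) / 2.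

(* The family of functions, with m = 2k+1:
   u^(2p+1), 0 <= p <= z;
   u^(2q+2s+j(m-1)+1), 0 <= s <= (m-5)/2, 0 <= j <= 2s+1  (s ranges over 0..k-2);
   (u^2+u^(2m))^(l+1), 0 <= l <= [(n-1)/2]. *)
Definition fam1 (m n : nat) : list (R -> R) :=
  map (fun p => fun u : R => u ^ (2 * p + 1)) (seq 0 (Z.to_nat (zpar m n + 1))).
Definition fam2 (k n : nat) : list (R -> R) :=
  flat_map (fun s =>
    map (fun j => fun u : R =>
           u ^ (Z.to_nat (2 * qpar (2 * k + 1) n + 2 * Z.of_nat s
                          + Z.of_nat j * (Z.of_nat (2 * k + 1) - 1) + 1)))
        (seq 0 (2 * s + 2)))
    (seq 0 (k - 1)).
Definition fam3 (m n : nat) : list (R -> R) :=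
  map (fun l => fun u : R => (u ^ 2 + u ^ (2 * m)) ^ (l + 1))
      (seq 0 (Z.to_nat ((Z.of_nat n - 1) / 2 + 1))).
Definition basis (k n : nat) : list (R -> R) :=
  fam1 (2 * k + 1) n ++ fam2 k n ++ fam3 (2 * k + 1) n.

Fixpoint lincomb_from (c : nat -> R) (B : list (R -> R)) (i : nat) (u : R) : R :=
  match B with
  | nil => 0
  | f :: B' => c i * f u + lincomb_from c B' (S i) u
  end.
Definition lincomb (c : nat -> R) (B : list (R -> R)) (u : R) : R := lincomb_from c B 0 u.

From Stdlib Require Import Reals ZArith List Lia Lra FinFun.
From Coquelicot Require Import Coquelicot.
Open Scope R_scope.

(* Both switching arcs are half turns of the rotation x' = y, y' = -x between
   opposite points, so M(u) is a combination of the moments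
   J(a,b) = int_0^PI x^a y^b dt, 1 <= a + b <= n + 1, of the two arcs.  Integrating
   d(x^p y^q)/dt over a half turn and using x^2 + y^2 = h expresses J(a,b) through
   the starting point (x0, y0) = +-(u, u^m): for even a + b it is a multiple of
   h^((a+b)/2), for odd a + b a polynomial in x0, y0 whose monomials have odd
   degree <= a + b.  At +-(u, u^m) these become the powers h^j and u^(A + m B) with
   A + B odd <= n + 1, and the exponents A + m B are exactly the odd exponents of
   the family.  Conversely the same boundary identity and
   sum_i C(j,i) J(2i, 2(j-i)) = PI h^j realise every member of the family by a
   single choice of p^+, q^+.  Independence holds because the members are
   u^e g(u) with pairwise distinct e and g(0) <> 0. *)

Lemma continuous_Rplus (f g : R -> R) (t : R) :
  continuous f t -> continuous g t -> continuous (fun s => f s + g s) t.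
Proof. intros; apply (continuous_plus f g); auto. Qed.

Lemma continuous_Rmult (f g : R -> R) (t : R) :
  continuous f t -> continuous g t -> continuous (fun s => f s * g s) t.
Proof. intros; apply (continuous_mult f g); auto. Qed.

Lemma continuous_Rscal (f : R -> R) (l t : R) :
  continuous f t -> continuous (fun s => l * f s) t.
Proof. intros; apply continuous_Rmult; auto using continuous_const. Qed.

Lemma continuous_pow (f : R -> R) (t : R) (p : nat) :
  continuous f t -> continuous (fun s => f s ^ p) t.
Proof.
  intros Hf; induction p as [|p IH]; simpl.
  - apply continuous_const.
  - apply continuous_Rmult; auto.
Qed.

Lemma continuous_of_is_derive (f : R -> R) (t l : R) : is_derive f t l -> continuous f t.
Proof. intros; apply (@ex_derive_continuous R_AbsRing R_NormedModule); exists l; auto. Qed.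

Lemma continuous_sum_f_R0 (f : nat -> R -> R) (t : R) (N : nat) :
  (forall i, continuous (f i) t) -> continuous (fun s => sum_f_R0 (fun i => f i s) N) t.
Proof.
  intros Hf; induction N as [|N IH]; simpl; auto.
  apply continuous_Rplus; auto.
Qed.

Lemma sum_f_R0_mul_l (f : nat -> R) (N : nat) (a : R) :
  a * sum_f_R0 f N = sum_f_R0 (fun i => a * f i) N.
Proof. rewrite scal_sum; apply sum_eq; intros; ring. Qed.

Lemma RInt_ext_R (f g : R -> R) (a b : R) :
  (forall t, f t = g t) -> RInt f a b = RInt g a b.
Proof. intros; apply RInt_ext; auto. Qed.

Lemma ex_RInt_continuous_R (f : R -> R) (a b : R) :
  (forall t, continuous f t) -> ex_RInt f a b.
Proof. intros; apply (@ex_RInt_continuous R_CompleteNormedModule); auto. Qed.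

Lemma RInt_scal_continuous (f : R -> R) (a b l : R) :
  (forall t, continuous f t) -> RInt (fun t => l * f t) a b = l * RInt f a b.
Proof. intros; apply (RInt_scal f a b l), ex_RInt_continuous_R; auto. Qed.

Lemma RInt_lin_continuous (f g : R -> R) (a b al be : R) :
  (forall t, continuous f t) -> (forall t, continuous g t) ->
  RInt (fun t => al * f t + be * g t) a b = al * RInt f a b + be * RInt g a b.
Proof.
  intros Hf Hg; rewrite <- !RInt_scal_continuous by auto.
  apply (RInt_plus (fun t => al * f t) (fun t => be * g t));
    apply ex_RInt_continuous_R; intros t; apply continuous_Rscal; auto.
Qed.

Lemma RInt_sum_f_R0_continuous (f : nat -> R -> R) (a b : R) (N : nat) :
  (forall i t, continuous (f i) t) ->
  RInt (fun t => sum_f_R0 (fun i => f i t) N) a b = sum_f_R0 (fun i => RInt (f i) a b) N.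
Proof.
  intros Hf; induction N as [|N IH]; simpl; [apply RInt_ext_R; auto|].
  rewrite <- IH.
  transitivity (1 * RInt (fun t => sum_f_R0 (fun i => f i t) N) a b + 1 * RInt (f (S N)) a b);
    [|ring].
  rewrite <- RInt_lin_continuous by (intros; try apply continuous_sum_f_R0; auto).
  apply RInt_ext_R; intros; ring.
Qed.

Lemma neg_pow (x : R) (p : nat) : (- x) ^ p = (-1) ^ p * x ^ p.
Proof. rewrite <- Rpow_mult_distr; f_equal; ring. Qed.

(** * Moments along a half turn of the rotation *)

Definition ftc_boundary (p q : nat) (x y : R) : R := ((-1) ^ (p + q) - 1) * (x ^ p * y ^ q).

Record rotation_arc (x y : R -> R) (x0 y0 : R) : Prop := {
  arc_dx : forall t, is_derive x t (y t);
  arc_dy : forall t, is_derive y t (- x t);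
  arc_start_x : x 0 = x0;
  arc_start_y : y 0 = y0;
  arc_end_x : x PI = - x0;
  arc_end_y : y PI = - y0;
  arc_circle : forall t, x t ^ 2 + y t ^ 2 = x0 ^ 2 + y0 ^ 2 }.

Definition arc_moment (x y : R -> R) (a b : nat) : R := RInt (fun t => x t ^ a * y t ^ b) 0 PI.

Section RotationArc.

Variables (x y : R -> R) (x0 y0 : R).
Hypothesis arc : rotation_arc x y x0 y0.

Lemma arc_monomial_continuous (a b : nat) (t : R) : continuous (fun s => x s ^ a * y s ^ b) t.
Proof.
  apply continuous_Rmult; apply continuous_pow; eapply continuous_of_is_derive;
    [apply (arc_dx _ _ _ _ arc)|apply (arc_dy _ _ _ _ arc)].
Qed.

Lemma arc_moment_lin (al be : R) (a b a' b' : nat) :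
  al * arc_moment x y a b + be * arc_moment x y a' b'
  = RInt (fun t => al * (x t ^ a * y t ^ b) + be * (x t ^ a' * y t ^ b')) 0 PI.
Proof. symmetry; apply RInt_lin_continuous; apply arc_monomial_continuous. Qed.

(* For [p = 0] (resp. [q = 0]) the truncated index [p - 1] (resp. [q - 1]) only
   appears with the coefficient [0]. *)
Lemma arc_moment_ftc (p q : nat) :
  INR p * arc_moment x y (p - 1) (q + 1) - INR q * arc_moment x y (p + 1) (q - 1)
  = ftc_boundary p q x0 y0.
Proof.
  unfold Rminus at 1; rewrite Ropp_mult_distr_l, arc_moment_lin.
  apply is_RInt_unique.
  replace (ftc_boundary p q x0 y0)
    with (@minus R_AbelianGroup (x PI ^ p * y PI ^ q) (x 0 ^ p * y 0 ^ q)).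
  2:{ destruct arc as [_ _ -> -> -> -> _]; unfold ftc_boundary, minus, plus, opp; simpl.
      rewrite !neg_pow, pow_add; ring. }
  apply (is_RInt_derive (fun t => x t ^ p * y t ^ q)); intros t _.
  - evar (d : R).
    replace (INR p * _ + _) with d.
    + apply (is_derive_mult (fun s => x s ^ p) (fun s => y s ^ q));
        [apply is_derive_pow, (arc_dx _ _ _ _ arc)|apply is_derive_pow, (arc_dy _ _ _ _ arc)|].
      intros; apply Rmult_comm.
    + unfold d, plus, mult; simpl; rewrite !Nat.add_1_r.
      destruct p as [|p], q as [|q]; simpl; rewrite ?Nat.sub_0_r; ring.
  - apply continuous_Rplus; apply continuous_Rscal, arc_monomial_continuous.
Qed.

Lemma arc_moment_circle (a b : nat) :
  arc_moment x y (a + 2) b + arc_moment x y a (b + 2) = (x0 ^ 2 + y0 ^ 2) * arc_moment x y a b.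
Proof.
  replace (_ + _) with (1 * arc_moment x y (a + 2) b + 1 * arc_moment x y a (b + 2)) by ring.
  replace (_ * arc_moment x y a b) with
    ((x0 ^ 2 + y0 ^ 2) * arc_moment x y a b + 0 * arc_moment x y a b) by ring.
  rewrite !arc_moment_lin; apply RInt_ext_R; intros t.
  rewrite <- (arc_circle _ _ _ _ arc t), !pow_add; ring.
Qed.

Lemma arc_moment_circle_power (L : nat) :
  sum_f_R0 (fun i => Binomial.C L i * arc_moment x y (2 * i) (2 * (L - i))) L
  = PI * (x0 ^ 2 + y0 ^ 2) ^ L.
Proof.
  transitivity
    (RInt (fun t => sum_f_R0 (fun i => Binomial.C L i * (x t ^ (2 * i) * y t ^ (2 * (L - i)))) L)
       0 PI).
  - rewrite RInt_sum_f_R0_continuous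
      by (intros; apply continuous_Rscal, arc_monomial_continuous).
    apply sum_eq; intros i _; unfold arc_moment.
    symmetry; apply RInt_scal_continuous; intros; apply arc_monomial_continuous.
  - rewrite (RInt_ext_R _ (fun _ => (x0 ^ 2 + y0 ^ 2) ^ L)).
    + rewrite RInt_const; unfold scal; simpl; unfold mult; simpl; ring.
    + intros t; rewrite <- (arc_circle _ _ _ _ arc t), binomial.
      apply sum_eq; intros i _; rewrite !pow_mult; ring.
Qed.

End RotationArc.

(** * Moments as forms in the starting point *)

Inductive parity_poly (e : nat) : (R -> R -> R) -> Prop :=
| parity_poly_monomial (p q L : nat) (lam : R) :
    (p + q + 2 * L = e)%nat -> parity_poly e (fun x y => lam * (x ^ p * y ^ q))
| parity_poly_add (f g : R -> R -> R) :
    parity_poly e f -> parity_poly e g -> parity_poly e (fun x y => f x y + g x y)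
| parity_poly_ext (f g : R -> R -> R) :
    parity_poly e f -> (forall x y, f x y = g x y) -> parity_poly e g.

Lemma parity_poly_scal (e : nat) (f : R -> R -> R) (al : R) :
  parity_poly e f -> parity_poly e (fun x y => al * f x y).
Proof.
  induction 1 as [p q L lam He|f g _ IHf _ IHg|f g _ IH E].
  - eapply parity_poly_ext; [apply (parity_poly_monomial e p q L (al * lam) He)|].
    intros; cbv beta; ring.
  - eapply parity_poly_ext; [apply (parity_poly_add e _ _ IHf IHg)|]; intros; cbv beta; ring.
  - eapply parity_poly_ext; [apply IH|]; intros; cbv beta; rewrite <- E; ring.
Qed.

Lemma parity_poly_mul_circle (e e' : nat) (f : R -> R -> R) :
  (e' = e + 2)%nat -> parity_poly e f -> parity_poly e' (fun x y => (x ^ 2 + y ^ 2) * f x y).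
Proof.
  intros ->; induction 1 as [p q L lam He|f g _ IHf _ IHg|f g _ IH E].
  - eapply parity_poly_ext;
      [apply parity_poly_add;
         [apply (parity_poly_monomial _ (p + 2) q L lam)
         |apply (parity_poly_monomial _ p (q + 2) L lam)]; lia|].
    intros; cbv beta; rewrite !pow_add; ring.
  - eapply parity_poly_ext; [apply (parity_poly_add _ _ _ IHf IHg)|]; intros; cbv beta; ring.
  - eapply parity_poly_ext; [apply IH|]; intros; cbv beta; rewrite <- E; ring.
Qed.

Definition moment_form (e : nat) (F : R -> R -> R) : Prop :=
  if Nat.even e then exists kap, forall x y, F x y = kap * (x ^ 2 + y ^ 2) ^ (e / 2)
  else parity_poly e F.

Lemma moment_form_lin (e : nat) (f g : R -> R -> R) (al be : R) :
  moment_form e f -> moment_form e g -> moment_form e (fun x y => al * f x y + be * g x y).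
Proof.
  unfold moment_form; destruct (Nat.even e).
  - intros [k1 H1] [k2 H2]; exists (al * k1 + be * k2); intros; rewrite H1, H2; ring.
  - intros; apply parity_poly_add; apply parity_poly_scal; auto.
Qed.

Lemma moment_form_ext (e : nat) (f g : R -> R -> R) :
  moment_form e f -> (forall x y, f x y = g x y) -> moment_form e g.
Proof.
  unfold moment_form; destruct (Nat.even e).
  - intros [kap H] E; exists kap; intros; rewrite <- E; auto.
  - intros; eapply parity_poly_ext; eauto.
Qed.

Lemma moment_form_mul_circle (e e' : nat) (f : R -> R -> R) :
  (e' = e + 2)%nat -> moment_form e f -> moment_form e' (fun x y => (x ^ 2 + y ^ 2) * f x y).
Proof.
  intros He; unfold moment_form.
  replace (Nat.even e') with (Nat.even e)
    by (subst; rewrite Nat.even_add; now destruct (Nat.even e)).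
  destruct (Nat.even e).
  - intros [kap H]; exists kap; intros; rewrite H.
    replace (e' / 2)%nat with (S (e / 2))
      by (subst; replace (e + 2)%nat with (e + 1 * 2)%nat by lia; rewrite Nat.div_add; lia).
    simpl; ring.
  - apply parity_poly_mul_circle; auto.
Qed.

Lemma moment_form_scal (e : nat) (f : R -> R -> R) (al : R) :
  moment_form e f -> moment_form e (fun x y => al * f x y).
Proof.
  intros Hf; eapply moment_form_ext; [apply (moment_form_lin e f f al 0 Hf Hf)|].
  intros; cbv beta; ring.
Qed.

Lemma moment_form_boundary (p q e : nat) : (p + q = e)%nat -> moment_form e (ftc_boundary p q).
Proof.
  intros <-; unfold moment_form, ftc_boundary; destruct (Nat.even (p + q)) eqn:Hpar.
  - exists 0; intros.
    apply Nat.even_spec in Hpar; destruct Hpar as [w ->]; rewrite pow_1_even; ring.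
  - assert (Hodd : Nat.odd (p + q) = true) by (unfold Nat.odd; rewrite Hpar; auto).
    apply Nat.odd_spec in Hodd; destruct Hodd as [w Hw].
    eapply parity_poly_ext; [apply (parity_poly_monomial _ p q 0 (-2)); lia|].
    intros; cbv beta; rewrite Hw, Nat.add_1_r, pow_1_odd; ring.
Qed.

Definition has_moment_form (a b : nat) : Prop :=
  exists F, moment_form (a + b) F /\
    forall x y x0 y0, rotation_arc x y x0 y0 -> arc_moment x y a b = F x0 y0.

Lemma INR_succ_neq_0 (a : nat) : INR (S a) <> 0.
Proof. apply not_0_INR; lia. Qed.

Lemma has_moment_form_0_0 : has_moment_form 0 0.
Proof.
  exists (fun _ _ => PI); split; [exists PI; intros; simpl; ring|].
  intros x y x0 y0 arc.
  pose proof (arc_moment_circle_power x y x0 y0 arc 0) as E.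
  cbn [sum_f_R0 Nat.mul Nat.add Nat.sub pow] in E; rewrite C_n_n in E; lra.
Qed.

Lemma has_moment_form_1_0 : has_moment_form 1 0.
Proof.
  exists (fun x y => -1 * ftc_boundary 0 1 x y); split.
  - apply moment_form_scal, moment_form_boundary; lia.
  - intros x y x0 y0 arc; rewrite <- (arc_moment_ftc x y x0 y0 arc 0 1); simpl; ring.
Qed.

Lemma has_moment_form_y1 (a : nat) : has_moment_form a 1.
Proof.
  exists (fun x y => / INR (S a) * ftc_boundary (S a) 0 x y); split.
  - apply moment_form_scal, moment_form_boundary; lia.
  - intros x y x0 y0 arc; rewrite <- (arc_moment_ftc x y x0 y0 arc (S a) 0).
    replace (S a - 1)%nat with a by lia; simpl.
    field; apply INR_succ_neq_0.
Qed.

Lemma has_moment_form_y0_step (a : nat) : has_moment_form a 0 -> has_moment_form (a + 2) 0.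
Proof.
  intros [F [HF EF]].
  exists (fun x y => / INR (S (S a)) *
                     (INR (S a) * ((x ^ 2 + y ^ 2) * F x y) + -1 * ftc_boundary (S a) 1 x y)).
  split.
  - apply moment_form_scal, moment_form_lin;
      [apply (moment_form_mul_circle (a + 0))|apply moment_form_boundary]; auto; lia.
  - intros x y x0 y0 arc.
    pose proof (arc_moment_ftc x y x0 y0 arc (S a) 1) as Eftc.
    pose proof (arc_moment_circle x y x0 y0 arc a 0) as Ecirc.
    replace (S a - 1)%nat with a in Eftc by lia.
    replace (S a + 1)%nat with (a + 2)%nat in Eftc by lia.
    cbn [Nat.add Nat.sub] in Eftc, Ecirc; change (INR 1) with 1 in Eftc.
    rewrite <- Eftc, <- (EF x y x0 y0 arc), <- Ecirc, (S_INR (S a)).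
    field; rewrite <- S_INR; apply INR_succ_neq_0.
Qed.

Lemma has_moment_form_y_step (a b : nat) : has_moment_form (a + 2) b -> has_moment_form a (b + 2).
Proof.
  intros [F [HF EF]].
  exists (fun x y => / INR (S a) * (INR (S b) * F x y + 1 * ftc_boundary (S a) (S b) x y)).
  split.
  - apply moment_form_scal, moment_form_lin; [|apply moment_form_boundary; lia].
    replace (a + (b + 2))%nat with (a + 2 + b)%nat by lia; exact HF.
  - intros x y x0 y0 arc.
    pose proof (arc_moment_ftc x y x0 y0 arc (S a) (S b)) as Eftc.
    replace (S a - 1)%nat with a in Eftc by lia; replace (S b - 1)%nat with b in Eftc by lia.
    replace (S a + 1)%nat with (a + 2)%nat in Eftc by lia;
      replace (S b + 1)%nat with (b + 2)%nat in Eftc by lia.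
    rewrite <- Eftc, <- (EF x y x0 y0 arc).
    field; apply INR_succ_neq_0.
Qed.

Lemma has_moment_form_y0 (a : nat) : has_moment_form a 0.
Proof.
  enough (H : has_moment_form a 0 /\ has_moment_form (a + 1) 0) by apply H.
  induction a as [|a [IH0 IH1]].
  - split; [apply has_moment_form_0_0|apply has_moment_form_1_0].
  - split; [replace (S a) with (a + 1)%nat by lia; auto|].
    replace (S a + 1)%nat with (a + 2)%nat by lia; apply has_moment_form_y0_step; auto.
Qed.

Lemma every_moment_has_form (a b : nat) : has_moment_form a b.
Proof.
  revert a; induction b as [b IH] using lt_wf_ind; intros a.
  destruct b as [|[|b]].
  - apply has_moment_form_y0.
  - apply has_moment_form_y1.
  - replace (S (S b)) with (b + 2)%nat by lia; apply has_moment_form_y_step, IH; lia.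
Qed.

(** * The Melnikov function as a sum of moments *)

Lemma rotation_arc_polar (r a : R) :
  rotation_arc (fun t => r * cos (a - t)) (fun t => r * sin (a - t)) (r * cos a) (r * sin a).
Proof.
  split; intros.
  - auto_derive; auto; unfold Rminus; ring.
  - auto_derive; auto; unfold Rminus; ring.
  - rewrite Rminus_0_r; auto.
  - rewrite Rminus_0_r; auto.
  - rewrite cos_minus, cos_PI, sin_PI; ring.
  - rewrite sin_minus, cos_PI, sin_PI; ring.
  - replace ((r * cos (a - t)) ^ 2 + (r * sin (a - t)) ^ 2)
      with (r ^ 2 * ((sin (a - t))² + (cos (a - t))²)) by (unfold Rsqr; ring).
    replace ((r * cos a) ^ 2 + (r * sin a) ^ 2)
      with (r ^ 2 * ((sin a)² + (cos a)²)) by (unfold Rsqr; ring).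
    rewrite !sin2_cos2; reflexivity.
Qed.

Lemma switch_point_polar (m : nat) (u : R) : (1 <= m)%nat -> 0 < u ->
  radius m u * cos (ang0 m u) = u /\ radius m u * sin (ang0 m u) = u ^ m.
Proof.
  intros Hm Hu; unfold radius, ang0; rewrite cos_atan, sin_atan.
  set (w := u ^ (m - 1)).
  assert (Hs : 0 < sqrt (1 + w²)) by (apply sqrt_lt_R0; unfold Rsqr; nra).
  assert (Hh : u ^ 2 + u ^ (2 * m) = (u * u) * (1 + w²)).
  { unfold w, Rsqr; rewrite <- pow_add.
    replace (2 * m)%nat with (2 + (m - 1 + (m - 1)))%nat by lia; rewrite pow_add; simpl; ring. }
  assert (Hw : u * w = u ^ m) by (unfold w; rewrite tech_pow_Rmult; f_equal; lia).
  rewrite Hh, sqrt_mult_alt, sqrt_square by nra.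
  split; [|rewrite <- Hw]; field; lra.
Qed.

Lemma Lplus_rotation_arc (m : nat) (u : R) : (1 <= m)%nat -> 0 < u ->
  rotation_arc (Lplus_x m u) (Lplus_y m u) (- u) (- u ^ m).
Proof.
  intros Hm Hu; destruct (switch_point_polar m u Hm Hu) as [Hc Hs].
  pose proof (rotation_arc_polar (radius m u) (ang0 m u + PI)) as H.
  rewrite neg_cos, neg_sin, <- !Ropp_mult_distr_r, Hc, Hs in H; exact H.
Qed.

Lemma Lminus_rotation_arc (m : nat) (u : R) : (1 <= m)%nat -> 0 < u ->
  rotation_arc (Lminus_x m u) (Lminus_y m u) u (u ^ m).
Proof.
  intros Hm Hu; destruct (switch_point_polar m u Hm Hu) as [Hc Hs].
  pose proof (rotation_arc_polar (radius m u) (ang0 m u)) as H.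
  rewrite Hc, Hs in H; exact H.
Qed.

Definition moment_sum (n : nat) (c d : nat -> nat -> R) (x y : R -> R) : R :=
  sum_f_R0 (fun i => sum_f_R0 (fun j =>
    c i j * arc_moment x y (i + 1) j + d i j * arc_moment x y i (j + 1)) (n - i)) n.

Lemma line_integral_rotation_arc (n : nat) (c d : nat -> nat -> R) (x y : R -> R) (x0 y0 : R) :
  rotation_arc x y x0 y0 ->
  line_integral (poly2 d n) (fun X Y => - poly2 c n X Y) x y 0 PI = moment_sum n c d x y.
Proof.
  intros arc; unfold line_integral, moment_sum.
  rewrite (RInt_ext_R _ (fun t => sum_f_R0 (fun i => sum_f_R0 (fun j =>
             c i j * (x t ^ (i + 1) * y t ^ j) + d i j * (x t ^ i * y t ^ (j + 1))) (n - i)) n)).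
  - rewrite RInt_sum_f_R0_continuous.
    + apply sum_eq; intros i _; rewrite RInt_sum_f_R0_continuous.
      * apply sum_eq; intros j _; rewrite (arc_moment_lin x y x0 y0 arc); reflexivity.
      * intros j t; apply continuous_Rplus; apply continuous_Rscal;
          apply (arc_monomial_continuous x y x0 y0 arc).
    + intros i t; apply continuous_sum_f_R0; intros j.
      apply continuous_Rplus; apply continuous_Rscal;
        apply (arc_monomial_continuous x y x0 y0 arc).
  - intros t.
    rewrite (is_derive_unique _ _ _ (arc_dx _ _ _ _ arc t)),
            (is_derive_unique _ _ _ (arc_dy _ _ _ _ arc t)).
    unfold poly2; match goal with
    |- ?D * y t + - ?C * - x t = _ => transitivity (x t * C + y t * D); [ring|]
    end.
    rewrite !sum_f_R0_mul_l, <- sum_plus; apply sum_eq; intros i _.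
    rewrite !sum_f_R0_mul_l, <- sum_plus; apply sum_eq; intros j _.
    rewrite !pow_add; ring.
Qed.

Lemma melnikov_moment_sum (m n : nat) (ap bp am bm : nat -> nat -> R) (u : R) :
  (1 <= m)%nat -> 0 < u ->
  melnikov_u m n ap bp am bm u
  = moment_sum n ap bp (Lplus_x m u) (Lplus_y m u)
    + moment_sum n am bm (Lminus_x m u) (Lminus_y m u).
Proof.
  intros Hm Hu; unfold melnikov_u.
  rewrite (line_integral_rotation_arc _ _ _ _ _ _ _ (Lplus_rotation_arc m u Hm Hu)),
          (line_integral_rotation_arc _ _ _ _ _ _ _ (Lminus_rotation_arc m u Hm Hu)).
  reflexivity.
Qed.

(** * The exponents of the family *)

Definition znat (k P : nat) : nat := (P * (2 * k + 1) + 3 * k - 2 * k * k)%nat.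

Definition gap_indices (k z : nat) : list nat :=
  flat_map (fun s => map (fun j => z + 2 + s + k * j)%nat (seq 0 (2 * s + 2))) (seq 0 (k - 1)).

Definition odd_indices (k P : nat) : list nat :=
  seq 0 (znat k P + 1) ++ gap_indices k (znat k P).

Section OddIndices.

Variables k P : nat.
Hypothesis HkP : (k <= P)%nat.

Lemma znat_spec : (znat k P + 2 * k * k = P * (2 * k + 1) + 3 * k)%nat.
Proof. unfold znat; nia. Qed.

(* With m = 2k + 1, a monomial u^A (u^m)^B with A + B = 2w + 1 is u^(2 (w + k B) + 1),
   and A + B <= n + 1 means w <= P = [n/2]; [odd_indices k P] lists exactly these
   half-exponents w + k B. *)
Lemma odd_indices_complete (w B : nat) :
  (w <= P)%nat -> (B <= 2 * w + 1)%nat -> In (w + k * B)%nat (odd_indices k P).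
Proof.
  intros Hw HB; pose proof znat_spec as Hz; apply in_or_app.
  destruct (Nat.le_gt_cases (w + k * B) (znat k P)) as [Hle|Hgt];
    [left; apply in_seq; lia|right].
  assert (HBlow : (2 * P + 4 <= B + 2 * k)%nat).
  { destruct (Nat.le_gt_cases (2 * P + 4) (B + 2 * k)) as [|HBs]; auto.
    assert (k * (B + 2 * k) <= k * (2 * P + 3))%nat by (apply Nat.mul_le_mono_l; lia); nia. }
  apply in_flat_map; exists (w + k - 2 - P)%nat; split; [apply in_seq; lia|].
  apply in_map_iff; exists (B + 2 * k - 2 * P - 4)%nat; split; [|apply in_seq; lia].
  nia.
Qed.

Lemma odd_indices_sound (v : nat) :
  In v (odd_indices k P) ->
  exists w B, (w <= P)%nat /\ (B <= 2 * w + 1)%nat /\ v = (w + k * B)%nat.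
Proof.
  pose proof znat_spec as Hz; intros Hv; apply in_app_or in Hv as [Hv|Hv].
  - apply in_seq in Hv.
    destruct (Nat.le_gt_cases v P) as [HvP|HvP]; [exists v, 0%nat; lia|].
    assert (Hk : (0 < k)%nat) by nia.
    set (B := ((v - P + k - 1) / k)%nat).
    assert (HB : (k * B <= v - P + k - 1 < k * B + k)%nat).
    { pose proof (Nat.div_mod (v - P + k - 1) k).
      pose proof (Nat.mod_upper_bound (v - P + k - 1) k); lia. }
    assert (HB2 : (B <= 2 * P + 3 - 2 * k)%nat).
    { destruct (Nat.le_gt_cases B (2 * P + 3 - 2 * k)) as [|HBs]; auto.
      assert (k * (2 * P + 4 - 2 * k) <= k * B)%nat by (apply Nat.mul_le_mono_l; lia); nia. }
    exists (v - k * B)%nat, B; nia.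
  - unfold gap_indices in Hv; apply in_flat_map in Hv as [s [Hs Hv]].
    apply in_map_iff in Hv as [j [<- Hj]]; apply in_seq in Hs, Hj.
    exists (P + 2 + s - k)%nat, (2 * P + 4 + j - 2 * k)%nat; nia.
Qed.

End OddIndices.

Lemma NoDup_flat_map_disjoint {A B : Type} (f : A -> list B) (l : list A) :
  NoDup l -> (forall a, In a l -> NoDup (f a)) ->
  (forall a a' x, In a l -> In a' l -> In x (f a) -> In x (f a') -> a = a') ->
  NoDup (flat_map f l).
Proof.
  induction l as [|a l IH]; intros Hl Hf Hdisj; simpl; [constructor|].
  inversion Hl as [|? ? Ha Hl']; subst.
  apply NoDup_app;
    [apply Hf; simpl; auto|apply IH; auto; intros; [apply Hf|eapply Hdisj]; simpl; eauto|].
  intros x Hx Hx'; apply in_flat_map in Hx' as [a' [Ha' Hx']].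
  assert (a = a') as <- by (apply (Hdisj a a' x); simpl; auto); contradiction.
Qed.

Lemma map_flat_map {A B C : Type} (f : B -> C) (g : A -> list B) (l : list A) :
  map f (flat_map g l) = flat_map (fun a => map f (g a)) l.
Proof. induction l as [|a l IH]; simpl; [|rewrite map_app, IH]; reflexivity. Qed.

Lemma gap_indices_length (k z : nat) : length (gap_indices k z) = ((k - 1) * k)%nat.
Proof.
  unfold gap_indices.
  enough (H : forall t, length (flat_map (fun s => map (fun j => z + 2 + s + k * j)%nat
                                            (seq 0 (2 * s + 2))) (seq 0 t)) = (t * (t + 1))%nat)
    by (rewrite H; destruct k; simpl; lia).
  induction t as [|t IH]; [reflexivity|].
  rewrite seq_S, flat_map_app, length_app, IH; simpl.
  rewrite app_nil_r, length_map, length_seq; lia.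
Qed.

Lemma odd_indices_length (k P : nat) :
  length (odd_indices k P) = (znat k P + 1 + (k - 1) * k)%nat.
Proof. unfold odd_indices; rewrite length_app, length_seq, gap_indices_length; lia. Qed.

Lemma odd_indices_NoDup (k P : nat) : NoDup (odd_indices k P).
Proof.
  unfold odd_indices, gap_indices; apply NoDup_app.
  - apply seq_NoDup.
  - apply NoDup_flat_map_disjoint; [apply seq_NoDup| |].
    + intros s Hs; apply in_seq in Hs.
      apply Injective_map_NoDup_in; [intros; nia|apply seq_NoDup].
    + intros s s' x Hs Hs' Hx Hx'; apply in_seq in Hs, Hs'.
      apply in_map_iff in Hx as [j [<- _]], Hx' as [j' [Hj _]].
      assert (E : (s + j * k = s' + j' * k)%nat) by lia.
      apply (f_equal (fun a => a mod k)) in E.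
      rewrite !Nat.Div0.mod_add, !Nat.mod_small in E by lia; exact E.
  - intros v Hv Hv'; apply in_seq in Hv.
    apply in_flat_map in Hv' as [s [_ Hv']]; apply in_map_iff in Hv' as [j [<- _]]; lia.
Qed.

Definition odd_power (v : nat) (u : R) : R := u ^ (2 * v + 1).

Definition circle_power (k l : nat) (u : R) : R := (u ^ 2 + u ^ (2 * (2 * k + 1))) ^ (l + 1).

Lemma half_even_odd (P r : nat) : (r < 2)%nat -> (Z.of_nat (2 * P + r) / 2 = Z.of_nat P)%Z.
Proof. intros; Z.div_mod_to_equations; lia. Qed.

Lemma half_pred_even_odd (P r : nat) :
  (r < 2)%nat -> ((Z.of_nat (2 * P + r) - 1) / 2 = Z.of_nat (P + r) - 1)%Z.
Proof. intros; Z.div_mod_to_equations; lia. Qed.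

Section BasisNormalForm.

Variables k P r : nat.
Hypothesis Hr : (r < 2)%nat.
Hypothesis HkP : (k <= P)%nat.

Lemma zpar_znat : zpar (2 * k + 1) (2 * P + r) = Z.of_nat (znat k P).
Proof.
  unfold zpar; rewrite half_even_odd by auto.
  replace (Z.of_nat (2 * k + 1) * Z.of_nat (2 * k + 1) - 5 * Z.of_nat (2 * k + 1) + 4)%Z
    with ((Z.of_nat k * (2 * Z.of_nat k - 3)) * 2)%Z by lia.
  rewrite Z.div_mul by lia; pose proof (znat_spec k P HkP); lia.
Qed.

Lemma qpar_znat : qpar (2 * k + 1) (2 * P + r) = Z.of_nat (znat k P + 2).
Proof.
  unfold qpar; rewrite half_even_odd by auto.
  replace (Z.of_nat (2 * k + 1) * Z.of_nat (2 * k + 1) - 5 * Z.of_nat (2 * k + 1))%Z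
    with (((Z.of_nat k - 2) * (2 * Z.of_nat k + 1)) * 2)%Z by lia.
  rewrite Z.div_mul by lia; pose proof (znat_spec k P HkP); lia.
Qed.

Lemma basis_normal_form :
  basis k (2 * P + r) = map odd_power (odd_indices k P) ++ map (circle_power k) (seq 0 (P + r)).
Proof.
  unfold basis, fam1, fam2, fam3, odd_indices, gap_indices.
  rewrite zpar_znat, qpar_znat, half_pred_even_odd, !map_app, map_flat_map, <- app_assoc
    by auto.
  replace (Z.of_nat (znat k P) + 1)%Z with (Z.of_nat (znat k P + 1)) by lia.
  replace (Z.of_nat (P + r) - 1 + 1)%Z with (Z.of_nat (P + r)) by lia.
  rewrite !Nat2Z.id; f_equal; f_equal.
  apply flat_map_ext; intros s; rewrite map_map; apply map_ext; intros j.
  unfold odd_power; match goal with |- context [Z.to_nat ?e] =>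
    replace (Z.to_nat e) with (2 * (znat k P + 2 + s + k * j) + 1)%nat; [reflexivity|]
  end.
  apply Nat2Z.inj; rewrite Z2Nat.id; lia.
Qed.

End BasisNormalForm.

(** * Spans and linear independence *)

Record pos_subspace (V : (R -> R) -> Prop) : Prop := {
  pos_subspace_zero : V (fun _ => 0);
  pos_subspace_lin : forall f g al be, V f -> V g -> V (fun u => al * f u + be * g u);
  pos_subspace_ext : forall f g, V f -> (forall u, 0 < u -> f u = g u) -> V g }.

Section PosSubspace.

Variable V : (R -> R) -> Prop.
Hypothesis HV : pos_subspace V.

Lemma pos_subspace_scal (f : R -> R) (al : R) : V f -> V (fun u => al * f u).
Proof.
  intros Hf; eapply (pos_subspace_ext _ HV); [apply (pos_subspace_lin _ HV f f al 0 Hf Hf)|].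
  intros; cbv beta; ring.
Qed.

Lemma pos_subspace_sum (f : nat -> R -> R) (N : nat) :
  (forall i, (i <= N)%nat -> V (f i)) -> V (fun u => sum_f_R0 (fun i => f i u) N).
Proof.
  induction N as [|N IH]; intros Hf; simpl; [apply Hf; lia|].
  eapply (pos_subspace_ext _ HV);
    [apply (pos_subspace_lin _ HV (fun u => sum_f_R0 (fun i => f i u) N) (f (S N)) 1 1);
       [apply IH; auto|apply Hf; lia]|].
  intros; cbv beta; ring.
Qed.

Lemma pos_subspace_lincomb_from (c : nat -> R) (B : list (R -> R)) (i : nat) :
  (forall f, In f B -> V f) -> V (lincomb_from c B i).
Proof.
  revert i; induction B as [|f B IH]; intros i HB; simpl.
  - apply (pos_subspace_zero _ HV).
  - eapply (pos_subspace_ext _ HV);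
      [apply (pos_subspace_lin _ HV f (lincomb_from c B (S i)) (c i) 1);
         [apply HB; simpl; auto|apply IH]|].
    + intros; apply HB; simpl; auto.
    + intros; cbv beta; ring.
Qed.

End PosSubspace.

Lemma lincomb_from_lin (c c' : nat -> R) (al be : R) (B : list (R -> R)) (i : nat) (u : R) :
  lincomb_from (fun j => al * c j + be * c' j) B i u
  = al * lincomb_from c B i u + be * lincomb_from c' B i u.
Proof. revert i; induction B as [|f B IH]; intros i; simpl; [|rewrite IH]; ring. Qed.

Lemma lincomb_from_ext (c c' : nat -> R) (B : list (R -> R)) (i : nat) (u : R) :
  (forall j, (i <= j)%nat -> c j = c' j) -> lincomb_from c B i u = lincomb_from c' B i u.
Proof.
  revert i; induction B as [|f B IH]; intros i Hc; simpl; auto.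
  rewrite Hc, (IH (S i)); auto; intros; apply Hc; lia.
Qed.

Lemma lincomb_from_zero (B : list (R -> R)) (i : nat) (u : R) :
  lincomb_from (fun _ => 0) B i u = 0.
Proof. revert i; induction B as [|f B IH]; intros i; simpl; [|rewrite IH]; ring. Qed.

Definition span (B : list (R -> R)) (f : R -> R) : Prop :=
  exists c, forall u, 0 < u -> f u = lincomb c B u.

Lemma span_pos_subspace (B : list (R -> R)) : pos_subspace (span B).
Proof.
  split.
  - exists (fun _ => 0); intros; unfold lincomb; rewrite lincomb_from_zero; auto.
  - intros f g al be [c Hc] [c' Hc']; exists (fun j => al * c j + be * c' j).
    intros u Hu; unfold lincomb; rewrite lincomb_from_lin, Hc, Hc' by auto; auto.
  - intros f g [c Hc] E; exists c; intros u Hu; rewrite <- E, Hc; auto.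
Qed.

Lemma span_In (B : list (R -> R)) (f : R -> R) : In f B -> span B f.
Proof.
  intros HB; enough (H : forall i, exists c, forall u, lincomb_from c B i u = f u)
    by (destruct (H 0%nat) as [c Hc]; exists c; intros; symmetry; apply Hc).
  induction B as [|g B IH]; intros i; [destruct HB|].
  destruct HB as [<-|HB].
  - exists (fun j => if Nat.eqb j i then 1 else 0); intros u; simpl.
    rewrite Nat.eqb_refl, (lincomb_from_ext _ (fun _ => 0)), lincomb_from_zero; [ring|].
    intros j Hj; destruct (Nat.eqb_spec j i); [lia|auto].
  - destruct (IH HB (S i)) as [c Hc].
    exists (fun j => if Nat.eqb j i then 0 else c j); intros u; simpl.
    rewrite Nat.eqb_refl, <- (Hc u), (lincomb_from_ext _ c); [ring|].
    intros j Hj; destruct (Nat.eqb_spec j i); [lia|auto].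
Qed.

Lemma continuous_zero_on_pos (f : R -> R) :
  continuous f 0 -> (forall u, 0 < u -> f u = 0) -> f 0 = 0.
Proof.
  intros Hc Hz; apply (filterlim_locally_unique (F := at_right 0) f).
  - eapply filterlim_filter_le_1; [|exact Hc]; intros Q [eps H]; exists eps; auto.
  - apply filterlim_ext_loc with (fun _ => 0); [|apply filterlim_const].
    exists (mkposreal 1 Rlt_0_1); intros; symmetry; auto.
Qed.

Lemma lincomb_from_pointwise (c : nat -> R) (B B' : list (R -> R)) (i : nat) (u : R) :
  Forall2 (fun f f' => forall u, f u = f' u) B B' -> lincomb_from c B i u = lincomb_from c B' i u.
Proof.
  intros HB; revert i; induction HB as [|f f' B B' Hf _ IH]; intros i; simpl; auto.
  rewrite Hf, IH; auto.
Qed.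

Lemma Forall2_map_pointwise {A : Type} (f f' : A -> R -> R) (l : list A) :
  (forall a u, f a u = f' a u) ->
  Forall2 (fun h h' => forall u, h u = h' u) (map f l) (map f' l).
Proof. intros Hf; induction l; simpl; constructor; auto. Qed.

Section PowerGerms.

Variable g : nat -> R -> R.
Hypothesis g_continuous : forall L, continuous (g L) 0.
Hypothesis g_nonzero : forall L, g L 0 <> 0.

Definition germ (eL : nat * nat) (u : R) : R := u ^ fst eL * g (snd eL) u.

Definition germ_quotient (K : nat) (eL : nat * nat) (u : R) : R :=
  if (fst eL <? K)%nat then 0 else u ^ (fst eL - K) * g (snd eL) u.

Lemma lincomb_germ_quotient (K : nat) (c : nat -> R) (ER : list (nat * nat)) (i : nat) (u : R) :
  (forall j e L, nth_error ER j = Some (e, L) -> (e < K)%nat -> c (i + j)%nat = 0) ->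
  u ^ K * lincomb_from c (map (germ_quotient K) ER) i u = lincomb_from c (map germ ER) i u.
Proof.
  revert i; induction ER as [|[e L] ER IH]; intros i Hc; simpl; [ring|].
  rewrite Rmult_plus_distr_l, IH.
  - unfold germ_quotient, germ; simpl; destruct (Nat.ltb_spec e K) as [HeK|HeK].
    + assert (Hci : c i = 0) by (rewrite <- (Nat.add_0_r i); apply (Hc 0%nat e L); auto).
      rewrite Hci; ring.
    + replace e with (K + (e - K))%nat at 2 by lia; rewrite pow_add; ring.
  - intros j e' L' Hj; replace (S i + j)%nat with (i + S j)%nat by lia.
    apply (Hc (S j) e' L'); auto.
Qed.

Lemma lincomb_germ_quotient_continuous
  (K : nat) (c : nat -> R) (ER : list (nat * nat)) (i : nat) :
  continuous (lincomb_from c (map (germ_quotient K) ER) i) 0.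
Proof.
  revert i; induction ER as [|[e L] ER IH]; intros i; simpl; [apply continuous_const|].
  apply continuous_Rplus; auto; apply continuous_Rscal.
  unfold germ_quotient; cbn [fst snd]; destruct (e <? K)%nat; [apply continuous_const|].
  apply continuous_Rmult; auto; apply continuous_pow, continuous_id.
Qed.

Lemma germ_quotient_at_0 (K e L : nat) : e <> K -> germ_quotient K (e, L) 0 = 0.
Proof.
  intros HeK; unfold germ_quotient; simpl; destruct (Nat.ltb_spec e K); [auto|].
  replace (e - K)%nat with (S (e - K - 1)) by lia; simpl; ring.
Qed.

Lemma lincomb_germ_quotient_at_0_absent
  (K : nat) (c : nat -> R) (ER : list (nat * nat)) (i : nat) :
  ~ In K (map fst ER) -> lincomb_from c (map (germ_quotient K) ER) i 0 = 0.
Proof.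
  revert i; induction ER as [|[e L] ER IH]; intros i HK; simpl in *; [auto|].
  rewrite germ_quotient_at_0, IH by tauto; ring.
Qed.

Lemma lincomb_germ_quotient_at_0
  (K L : nat) (c : nat -> R) (ER : list (nat * nat)) (i j : nat) :
  NoDup (map fst ER) -> nth_error ER j = Some (K, L) ->
  lincomb_from c (map (germ_quotient K) ER) i 0 = c (i + j)%nat * g L 0.
Proof.
  revert i j; induction ER as [|[e L'] ER IH]; intros i j Hnd Hj; [destruct j; discriminate|].
  simpl in Hnd; inversion Hnd as [|? ? He Hnd']; subst; simpl.
  destruct j as [|j]; simpl in Hj.
  - injection Hj as -> ->.
    rewrite lincomb_germ_quotient_at_0_absent by auto.
    unfold germ_quotient; simpl; rewrite Nat.ltb_irrefl, Nat.sub_diag, Nat.add_0_r; ring.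
  - rewrite (IH (S i) j Hnd' Hj), germ_quotient_at_0.
    + replace (S i + j)%nat with (i + S j)%nat by lia; ring.
    + intros ->; apply He, (in_map fst ER (K, L)), (nth_error_In _ _ Hj).
Qed.

Lemma germs_independent (c : nat -> R) (ER : list (nat * nat)) :
  NoDup (map fst ER) -> (forall u, 0 < u -> lincomb c (map germ ER) u = 0) ->
  forall j, (j < length ER)%nat -> c j = 0.
Proof.
  intros Hnd Hz.
  (* Once the coefficients of all orders < K vanish, divide by u^K and let u -> 0+. *)
  assert (Hlow : forall K j e L, nth_error ER j = Some (e, L) -> (e < K)%nat -> c j = 0).
  { induction K as [|K IH]; intros j e L Hj HeK; [lia|].
    destruct (Nat.eq_dec e K) as [->|HeK']; [|apply (IH j e L); auto; lia].
    assert (Hq : forall u, 0 < u -> lincomb_from c (map (germ_quotient K) ER) 0 u = 0).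
    { intros u Hu; apply (Rmult_eq_reg_l (u ^ K)); [|apply pow_nonzero; lra].
      rewrite lincomb_germ_quotient, Rmult_0_r; [apply Hz; auto|].
      intros j' e' L' Hj' He'; apply (IH j' e' L'); auto. }
    pose proof (continuous_zero_on_pos _ (lincomb_germ_quotient_continuous K c ER 0) Hq) as H0.
    rewrite (lincomb_germ_quotient_at_0 K L c ER 0 j Hnd Hj) in H0.
    apply Rmult_integral in H0 as [H0|H0]; [exact H0|contradiction (g_nonzero L)]. }
  intros j Hj; destruct (nth_error ER j) as [[e L]|] eqn:E.
  - apply (Hlow (S e) j e L); auto.
  - apply nth_error_None in E; lia.
Qed.

End PowerGerms.

(** * The family spans the Melnikov functions and is realised by them *)

Lemma sum_f_R0_eq_0 (f : nat -> R) (N : nat) :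
  (forall i, (i <= N)%nat -> f i = 0) -> sum_f_R0 f N = 0.
Proof.
  intros Hf; rewrite (sum_eq _ (fun _ => 0)), sum_cte by auto; ring.
Qed.

Lemma sum_f_R0_indicator (g : nat -> R) (b N : nat) :
  sum_f_R0 (fun j => if (j =? b)%nat then g j else 0) N = if (b <=? N)%nat then g b else 0.
Proof.
  induction N as [|N IH]; cbn [sum_f_R0].
  - destruct b; simpl; [ring|auto].
  - rewrite IH; destruct (Nat.leb_spec b N), (Nat.eqb_spec (S N) b), (Nat.leb_spec b (S N));
      subst; try lia; ring.
Qed.

Lemma moment_sum_lin (n : nat) (c c' d d' : nat -> nat -> R) (al be : R) (x y : R -> R) :
  moment_sum n (fun i j => al * c i j + be * c' i j) (fun i j => al * d i j + be * d' i j) x y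
  = al * moment_sum n c d x y + be * moment_sum n c' d' x y.
Proof.
  unfold moment_sum; rewrite !sum_f_R0_mul_l, <- sum_plus; apply sum_eq; intros i _.
  rewrite !sum_f_R0_mul_l, <- sum_plus; apply sum_eq; intros j _; ring.
Qed.

Lemma moment_sum_zero (n : nat) (x y : R -> R) :
  moment_sum n (fun _ _ => 0) (fun _ _ => 0) x y = 0.
Proof. apply sum_f_R0_eq_0; intros i _; apply sum_f_R0_eq_0; intros; ring. Qed.

Lemma moment_sum_select (n a b : nat) (ca cb : R) (x y : R -> R) : (a + b <= n)%nat ->
  moment_sum n (fun i j => if andb (i =? a)%nat (j =? b)%nat then ca else 0)
               (fun i j => if andb (i =? a)%nat (j =? b)%nat then cb else 0) x y
  = ca * arc_moment x y (a + 1) b + cb * arc_moment x y a (b + 1).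
Proof.
  intros Hab; unfold moment_sum.
  rewrite (sum_eq _ (fun i => if (i =? a)%nat then sum_f_R0 (fun j => if (j =? b)%nat
             then ca * arc_moment x y (i + 1) j + cb * arc_moment x y i (j + 1) else 0) (n - i)
           else 0)).
  - rewrite sum_f_R0_indicator, sum_f_R0_indicator.
    destruct (Nat.leb_spec a n), (Nat.leb_spec b (n - a)); [reflexivity|lia..].
  - intros i _; destruct (Nat.eqb i a).
    + apply sum_eq; intros j _; destruct (Nat.eqb j b); simpl; ring.
    + apply sum_f_R0_eq_0; intros; simpl; ring.
Qed.

Definition melnikov_image (m n : nat) (f : R -> R) : Prop :=
  exists ap bp am bm, forall u, 0 < u -> melnikov_u m n ap bp am bm u = f u.

Section MelnikovImage.

Variables m n : nat.
Hypothesis Hm : (1 <= m)%nat.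

Lemma melnikov_image_pos_subspace : pos_subspace (melnikov_image m n).
Proof.
  split.
  - exists (fun _ _ => 0), (fun _ _ => 0), (fun _ _ => 0), (fun _ _ => 0); intros u Hu.
    rewrite melnikov_moment_sum, !moment_sum_zero by auto; ring.
  - intros f g al be (ap & bp & am & bm & Hf) (ap' & bp' & am' & bm' & Hg).
    exists (fun i j => al * ap i j + be * ap' i j), (fun i j => al * bp i j + be * bp' i j),
           (fun i j => al * am i j + be * am' i j), (fun i j => al * bm i j + be * bm' i j).
    intros u Hu; rewrite melnikov_moment_sum, !moment_sum_lin, <- Hf, <- Hg by auto.
    rewrite !melnikov_moment_sum by auto; ring.
  - intros f g (ap & bp & am & bm & Hf) E; exists ap, bp, am, bm; intros u Hu.
    rewrite <- E, Hf; auto.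
Qed.

(* The alternative [al = 0] covers the truncated indices of [arc_moment_ftc]. *)
Lemma Lplus_moment_in_image (al : R) (a b : nat) :
  al = 0 \/ (1 <= a + b <= n + 1)%nat ->
  melnikov_image m n (fun u => al * arc_moment (Lplus_x m u) (Lplus_y m u) a b).
Proof.
  intros [->|Hab].
  - eapply (pos_subspace_ext _ melnikov_image_pos_subspace);
      [apply (pos_subspace_zero _ melnikov_image_pos_subspace)|intros; cbv beta; ring].
  - assert (Hsel : forall a' b' ca cb, (a' + b' <= n)%nat ->
              (forall u, 0 < u -> ca * arc_moment (Lplus_x m u) (Lplus_y m u) (a' + 1) b'
                                  + cb * arc_moment (Lplus_x m u) (Lplus_y m u) a' (b' + 1)
                                  = al * arc_moment (Lplus_x m u) (Lplus_y m u) a b) ->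
              melnikov_image m n (fun u => al * arc_moment (Lplus_x m u) (Lplus_y m u) a b)).
    { intros a' b' ca cb Hn E.
      exists (fun i j => if andb (i =? a')%nat (j =? b')%nat then ca else 0),
             (fun i j => if andb (i =? a')%nat (j =? b')%nat then cb else 0),
             (fun _ _ => 0), (fun _ _ => 0); intros u Hu.
      rewrite melnikov_moment_sum, moment_sum_zero, moment_sum_select, Rplus_0_r; auto. }
    destruct b as [|b].
    + apply (Hsel (a - 1)%nat 0%nat al 0); [lia|].
      intros; replace (a - 1 + 1)%nat with a by lia; ring.
    + apply (Hsel a b 0 al); [lia|intros; replace (b + 1)%nat with (S b) by lia; ring].
Qed.

End MelnikovImage.

Lemma circle_at_signed_point (sg u : R) (m : nat) :
  sg ^ 2 = 1 -> (sg * u) ^ 2 + (sg * u ^ m) ^ 2 = u ^ 2 + u ^ (2 * m).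
Proof. intros Hsg; rewrite !Rpow_mult_distr, Hsg, <- pow_mult, Nat.mul_comm; ring. Qed.

Section ModelBasis.

Variables k P r : nat.
Hypothesis Hr : (r < 2)%nat.
Hypothesis HkP : (k <= P)%nat.

Local Notation m := (2 * k + 1)%nat.
Local Notation n := (2 * P + r)%nat.

Lemma basis_In (f : R -> R) :
  In f (basis k n) ->
  (exists v, In v (odd_indices k P) /\ f = odd_power v)
  \/ (exists l, (l < P + r)%nat /\ f = circle_power k l).
Proof.
  rewrite basis_normal_form by auto; intros Hf; apply in_app_or in Hf as [Hf|Hf];
    apply in_map_iff in Hf as [v [<- Hv]]; [left|right]; exists v; split; auto.
  apply in_seq in Hv; lia.
Qed.

Lemma odd_power_in_basis (v : nat) : In v (odd_indices k P) -> In (odd_power v) (basis k n).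
Proof.
  intros Hv; rewrite basis_normal_form by auto; apply in_or_app; left; apply in_map; auto.
Qed.

Lemma circle_power_in_basis (l : nat) : (l < P + r)%nat -> In (circle_power k l) (basis k n).
Proof.
  intros Hl; rewrite basis_normal_form by auto; apply in_or_app; right.
  apply in_map, in_seq; lia.
Qed.

Lemma monomial_in_span (A B : nat) :
  Nat.odd (A + B) = true -> (A + B <= n + 1)%nat ->
  span (basis k n) (fun u => u ^ A * (u ^ m) ^ B).
Proof.
  intros Hodd HAB; apply Nat.odd_spec in Hodd as [w Hw].
  eapply (pos_subspace_ext _ (span_pos_subspace _));
    [apply span_In, odd_power_in_basis, (odd_indices_complete k P HkP w B); lia|].
  intros u _; unfold odd_power; rewrite <- pow_mult, <- pow_add; f_equal; lia.
Qed.

Lemma parity_poly_in_span (e : nat) (F : R -> R -> R) (sg : R) :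
  sg ^ 2 = 1 -> Nat.odd e = true -> (e <= n + 1)%nat -> parity_poly e F ->
  span (basis k n) (fun u => F (sg * u) (sg * u ^ m)).
Proof.
  intros Hsg Hodd He HF; induction HF as [p q L lam HL|f g _ IHf _ IHg|f g _ IH E].
  - eapply (pos_subspace_ext _ (span_pos_subspace _));
      [apply (pos_subspace_scal _ (span_pos_subspace _)
                (fun u => u ^ p * (u ^ m) ^ q) (lam * sg ^ (p + q))), monomial_in_span|].
    + rewrite <- HL, Nat.odd_add_mul_2 in Hodd; exact Hodd.
    + lia.
    + intros u _; rewrite !Rpow_mult_distr, pow_add; ring.
  - eapply (pos_subspace_ext _ (span_pos_subspace _));
      [apply (pos_subspace_lin _ (span_pos_subspace _) _ _ 1 1 IHf IHg)|].
    intros; cbv beta; ring.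
  - eapply (pos_subspace_ext _ (span_pos_subspace _)); [apply IH|].
    intros; cbv beta; rewrite E; auto.
Qed.

Lemma moment_form_in_span (e : nat) (F : R -> R -> R) (sg : R) :
  sg ^ 2 = 1 -> (1 <= e <= n + 1)%nat -> moment_form e F ->
  span (basis k n) (fun u => F (sg * u) (sg * u ^ m)).
Proof.
  intros Hsg He; unfold moment_form; destruct (Nat.even e) eqn:Hev.
  - intros [kap Hkap]; apply Nat.even_spec in Hev as [w ->].
    eapply (pos_subspace_ext _ (span_pos_subspace _));
      [apply (pos_subspace_scal _ (span_pos_subspace _) (circle_power k (w - 1)) kap),
         span_In, circle_power_in_basis; lia|].
    intros u _; rewrite Hkap, circle_at_signed_point, (Nat.mul_comm 2 w), Nat.div_mul by auto.
    unfold circle_power; replace (w - 1 + 1)%nat with w by lia; reflexivity.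
  - intros HF; apply (parity_poly_in_span e); auto; [|lia].
    unfold Nat.odd; rewrite Hev; reflexivity.
Qed.

Lemma arc_moment_in_span (X Y : R -> R -> R) (sg : R) (a b : nat) :
  sg ^ 2 = 1 -> (forall u, 0 < u -> rotation_arc (X u) (Y u) (sg * u) (sg * u ^ m)) ->
  (1 <= a + b <= n + 1)%nat ->
  span (basis k n) (fun u => arc_moment (X u) (Y u) a b).
Proof.
  intros Hsg Harc Hab; destruct (every_moment_has_form a b) as [F [HF EF]].
  eapply (pos_subspace_ext _ (span_pos_subspace _));
    [apply (moment_form_in_span (a + b) F sg); auto|].
  intros u Hu; symmetry; apply EF, Harc; auto.
Qed.

Lemma moment_sum_in_span (X Y : R -> R -> R) (sg : R) (c d : nat -> nat -> R) :
  sg ^ 2 = 1 -> (forall u, 0 < u -> rotation_arc (X u) (Y u) (sg * u) (sg * u ^ m)) ->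
  span (basis k n) (fun u => moment_sum n c d (X u) (Y u)).
Proof.
  intros Hsg Harc; pose proof (span_pos_subspace (basis k n)) as HV.
  apply (pos_subspace_sum _ HV); intros i Hi; apply (pos_subspace_sum _ HV); intros j Hj.
  apply (pos_subspace_lin _ HV); apply (arc_moment_in_span _ _ sg); auto; lia.
Qed.

Lemma melnikov_in_span (ap bp am bm : nat -> nat -> R) :
  span (basis k n) (melnikov_u m n ap bp am bm).
Proof.
  pose proof (span_pos_subspace (basis k n)) as HV.
  eapply (pos_subspace_ext _ HV);
    [apply (pos_subspace_lin _ HV (fun u => moment_sum n ap bp (Lplus_x m u) (Lplus_y m u))
                                 (fun u => moment_sum n am bm (Lminus_x m u) (Lminus_y m u)) 1 1);
       [apply (moment_sum_in_span (Lplus_x m) (Lplus_y m) (-1))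
       |apply (moment_sum_in_span (Lminus_x m) (Lminus_y m) 1)]|].
  - ring.
  - intros u Hu; replace (-1 * u) with (- u) by ring.
    replace (-1 * u ^ m) with (- u ^ m) by ring; apply Lplus_rotation_arc; auto; lia.
  - ring.
  - intros u Hu; rewrite !Rmult_1_l; apply Lminus_rotation_arc; auto; lia.
  - intros u Hu; cbv beta; rewrite melnikov_moment_sum by (auto; lia); ring.
Qed.

Lemma odd_power_in_image (v : nat) :
  In v (odd_indices k P) -> melnikov_image m n (odd_power v).
Proof.
  intros Hv; destruct (odd_indices_sound k P HkP v Hv) as (w & B & Hw & HB & ->).
  remember (2 * w + 1 - B)%nat as A eqn:HA.
  pose proof (melnikov_image_pos_subspace m n ltac:(lia)) as HV.
  eapply (pos_subspace_ext _ HV);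
    [eapply (pos_subspace_lin _ HV _ _ (/ 2) (- / 2));
       [apply (Lplus_moment_in_image m n ltac:(lia) (INR A) (A - 1) (B + 1))
       |apply (Lplus_moment_in_image m n ltac:(lia) (INR B) (A + 1) (B - 1))]|].
  - destruct A; [left; reflexivity|right; lia].
  - destruct B; [left; reflexivity|right; lia].
  - intros u Hu; cbv beta.
    pose proof (arc_moment_ftc _ _ _ _ (Lplus_rotation_arc m u ltac:(lia) Hu) A B) as E.
    unfold ftc_boundary in E.
    replace ((- u) ^ A * (- u ^ m) ^ B) with ((-1) ^ (A + B) * (u ^ A * (u ^ m) ^ B)) in E
      by (rewrite !neg_pow, pow_add; ring).
    replace (A + B)%nat with (S (2 * w)) in E by lia; rewrite pow_1_odd in E.
    unfold odd_power; replace (2 * (w + k * B) + 1)%nat with (A + m * B)%nat by lia.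
    rewrite pow_add, pow_mult; lra.
Qed.

Lemma circle_power_in_image (l : nat) :
  (l < P + r)%nat -> melnikov_image m n (circle_power k l).
Proof.
  intros Hl; pose proof (melnikov_image_pos_subspace m n ltac:(lia)) as HV.
  eapply (pos_subspace_ext _ HV).
  - eapply (pos_subspace_scal _ HV _ (/ PI)), (pos_subspace_sum _ HV (fun i u =>
      Binomial.C (l + 1) i * arc_moment (Lplus_x m u) (Lplus_y m u) (2 * i) (2 * (l + 1 - i)))
      (l + 1)).
    intros i Hi; apply Lplus_moment_in_image; [lia|right; lia].
  - intros u Hu; cbv beta.
    rewrite (arc_moment_circle_power _ _ _ _ (Lplus_rotation_arc m u ltac:(lia) Hu)).
    replace ((- u) ^ 2 + (- u ^ m) ^ 2) with (u ^ 2 + u ^ (2 * m))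
      by (rewrite (Nat.mul_comm 2 m), pow_mult; ring).
    unfold circle_power; field; apply PI_neq0.
Qed.

Lemma basis_in_image (c : nat -> R) : melnikov_image m n (lincomb c (basis k n)).
Proof.
  apply (pos_subspace_lincomb_from _ (melnikov_image_pos_subspace m n ltac:(lia))).
  intros f Hf; destruct (basis_In f Hf) as [(v & Hv & ->)|(l & Hl & ->)].
  - apply odd_power_in_image; auto.
  - apply circle_power_in_image; auto.
Qed.

Lemma basis_germs :
  Forall2 (fun f f' => forall u, f u = f' u) (basis k n)
    (map (germ (fun L u => (1 + u ^ (4 * k)) ^ L))
       (map (fun v => (2 * v + 1, 0))%nat (odd_indices k P)
        ++ map (fun l => (2 * (l + 1), l + 1))%nat (seq 0 (P + r)))).
Proof.
  rewrite basis_normal_form, map_app, !map_map by auto.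
  apply Forall2_app; apply Forall2_map_pointwise; intros a u;
    unfold germ, odd_power, circle_power; cbn [fst snd].
  - ring.
  - rewrite (pow_mult u 2 (a + 1)), <- Rpow_mult_distr; f_equal.
    replace (2 * (2 * k + 1))%nat with (2 + 4 * k)%nat by lia; rewrite pow_add; ring.
Qed.

Lemma basis_independent (c : nat -> R) :
  (forall u, 0 < u -> lincomb c (basis k n) u = 0) ->
  forall i, (i < length (basis k n))%nat -> c i = 0.
Proof.
  intros Hz; pose proof basis_germs as HG.
  rewrite (Forall2_length HG), length_map.
  apply (germs_independent (fun L u => (1 + u ^ (4 * k)) ^ L)).
  - intros L; apply continuous_pow, continuous_Rplus;
      [apply continuous_const|apply continuous_pow, continuous_id].
  - intros L; apply pow_nonzero; assert (0 <= 0 ^ (4 * k)) by (apply pow_le; lra); lra.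
  - rewrite map_app, !map_map; cbn [fst]; apply NoDup_app.
    + apply Injective_map_NoDup; [intros ? ? ?; lia|apply odd_indices_NoDup].
    + apply Injective_map_NoDup; [intros ? ? ?; lia|apply seq_NoDup].
    + intros e He He'; apply in_map_iff in He as [v [<- _]], He' as [l [Hl _]]; lia.
  - intros u Hu; unfold lincomb; rewrite <- (lincomb_from_pointwise c _ _ 0 u HG).
    apply Hz; auto.
Qed.

Lemma basis_length :
  INR (length (basis k n)) =
    IZR ((Z.of_nat n - 1) / 2) + IZR (Z.of_nat n / 2) * INR m
    - INR m ^ 2 / 4 + 3 / 2 * INR m + 3 / 4.
Proof.
  rewrite half_pred_even_odd, half_even_odd by auto.
  assert (Hlen : (length (basis k n) + k * k = P * (2 * k + 1) + 2 * k + 1 + (P + r))%nat).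
  { rewrite basis_normal_form, length_app, !length_map, odd_indices_length, length_seq by auto.
    pose proof (znat_spec k P HkP); destruct k; nia. }
  apply (f_equal INR) in Hlen; rewrite minus_IZR, <- !INR_IZR_INZ.
  repeat rewrite ?plus_INR, ?mult_INR in Hlen; repeat rewrite ?plus_INR, ?mult_INR.
  simpl in *; lra.
Qed.

End ModelBasis.

Lemma nat_half_split (n : nat) : exists P r, n = (2 * P + r)%nat /\ (r < 2)%nat.
Proof.
  exists (n / 2)%nat, (n mod 2)%nat; split; [apply Nat.div_mod|apply Nat.mod_upper_bound]; lia.
Qed.

Theorem lemma3p7 (k n : nat) (hn : (2 * k + 1 - 1 <= n)%nat) :
  let m := (2 * k + 1)%nat in
  let B := basis k n in
  (* number of functions *)
  INR (length B) =
    IZR ((Z.of_nat n - 1) / 2) + IZR (Z.of_nat n / 2) * INR m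
    - INR m ^ 2 / 4 + 3 / 2 * INR m + 3 / 4
  (* linear independence on (0, +oo) *)
  /\ (forall c : nat -> R,
        (forall u, 0 < u -> lincomb c B u = 0) ->
        forall i, (i < length B)%nat -> c i = 0)
  (* M(u) is a linear combination of the family *)
  /\ (forall ap bp am bm : nat -> nat -> R,
        exists c : nat -> R,
          forall u, 0 < u -> melnikov_u m n ap bp am bm u = lincomb c B u)
  (* the coefficients are independent: every coefficient vector is attained *)
  /\ (forall c : nat -> R,
        exists ap bp am bm : nat -> nat -> R,
          forall u, 0 < u -> melnikov_u m n ap bp am bm u = lincomb c B u).
Proof.
  intros m B; subst m B.
  destruct (nat_half_split n) as (P & r & -> & Hr).
  assert (HkP : (k <= P)%nat) by lia.
  split; [apply basis_length; auto|].
  split; [apply basis_independent; auto|].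
  split; [intros; apply melnikov_in_span; auto|intros; apply basis_in_image; auto].
Qed.
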